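(* The scheme $X_h\subset U_h^{2,q}$ is defined by the vanishing of the polynomials $$f_{2k}=(a_{2k}^{q^2}-a_{2k})+\sum_{i=1}^{2k-1}(-1)^i a_i^q\,(a_{2k-i}^{q^2}-a_{2k-i}),\qquad 1\le k\le h-1,$$ in the coordinates $a_1,\dots,a_{2(h-1)}$ of $1+\sum a_i\tau^i$ (as usual $a_0=1$ is not a coordinate and does not occur).
   Context: Let $p$ be a prime, $q$ a power of $p$, and $h\ge2$ an integer. For a commutative $\mathbb{F}_q$-algebra $A$, $U_h^{2,q}(A)$ is the set of formal expressions $1+\sum_{i=1}^{2(h-1)}a_i\tau^i$ ($a_i\in A$) with multiplication obtained by extending $(a\tau^i)(b\tau^j)=ab^{q^i}\tau^{i+j}$ bi-additively, where $\tau^0=1$ and $\tau^k=0$ for $k>2(h-1)$; as a scheme $U_h^{2,q}$ is affine space with coordinates $a_1,\dots,a_{2(h-1)}$. For $x=1+\sum a_i\tau^i\in U_h^{2,q}(A)$ let $\iota_h(x)=\begin{pmatrix}1+a_2\pi+a_4\pi^2+\cdots & a_1+a_3\pi+a_5\pi^2+\cdots\\ a_1^q\pi+a_3^q\pi^2+\cdots & 1+a_2^q\pi+a_4^q\pi^2+\cdots\end{pmatrix}$, a matrix over $A[\pi]/(\pi^h)$, and write $\det\iota_h(x)=1+\sum_{k=1}^{h-1}c_k(x)\pi^k$. The subscheme $X_h\subset U_h^{2,q}$ is defined by the condition that $\det\iota_h(x)$ is fixed by the $q$-power Frobenius on coefficients, i.e. $c_k^q=c_k$ for $1\le k\le h-1$.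 *)

From HB Require Import structures.
From mathcomp Require Import all_boot all_order all_algebra.
Set Implicit Arguments. Unset Strict Implicit. Unset Printing Implicit Defensive.
Import GRing.Theory.
Local Open Scope ring_scope.

Section Defs.
Variables (F : finFieldType) (A : comAlgType F) (h : nat).

(* q = #|F| ; F plays the role of F_q, A is a commutative F_q-algebra. *)
Definition qF : nat := #|F|.

(* The coordinates a_1, ..., a_(2(h-1)) of 1 + sum a_i tau^i; values of
   a outside this range are ignored (read as 0). *)
Definition coord (a : nat -> A) (i : nat) : A :=
  if (0 < i <= 2 * (h - 1))%N then a i else 0.

(* Entries of iota_h(x) as polynomials in pi, truncated below pi^h. *)
Definition iotaD1 (a : nat -> A) : {poly A} :=
  \poly_(j < h) (if j == 0%N then 1 else coord a (2 * j)).
Definition iotaB (a : nat -> A) : {poly A} :=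
  \poly_(j < h) coord a (2 * j).+1.
Definition iotaC (a : nat -> A) : {poly A} :=
  \poly_(j < h) (if j == 0%N then 0 else coord a (2 * j).-1 ^+ qF).
Definition iotaD2 (a : nat -> A) : {poly A} :=
  \poly_(j < h) (if j == 0%N then 1 else coord a (2 * j) ^+ qF).

Definition iota_mx (a : nat -> A) : 'M[{poly A}]_2 :=
  \matrix_(i < 2, j < 2)
    if i == 0 :> nat then (if j == 0 :> nat then iotaD1 a else iotaB a)
    else (if j == 0 :> nat then iotaC a else iotaD2 a).

(* c_k(x): coefficient of pi^k in det iota_h(x) (meaningful for k < h,
   where it equals the coefficient in A[pi]/(pi^h)). *)
Definition c_coef (a : nat -> A) (k : nat) : A := (\det (iota_mx a))`_k.

Definition in_Xh (a : nat -> A) : Prop :=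
  forall k : nat, (1 <= k <= h - 1)%N -> c_coef a k ^+ qF = c_coef a k.

Definition f_even (a : nat -> A) (k : nat) : A :=
  (coord a (2 * k) ^+ (qF ^ 2) - coord a (2 * k))
  + \sum_(1 <= i < 2 * k)
      (-1) ^+ i * coord a i ^+ qF
        * (coord a (2 * k - i) ^+ (qF ^ 2) - coord a (2 * k - i)).

End Defs.

From Pilot Require Import Defs.
From HB Require Import structures.
From mathcomp Require Import all_boot all_algebra all_solvable all_field.
From mathcomp Require Import zify.
Import GRing.Theory.
Local Open Scope ring_scope.

(* Expanding the 2x2 determinant, c_k is the alternating convolution
   c_k = sum_(i = 0 .. 2k) (-1)^i a_i a_(2k-i)^q   (with a_0 = 1).
   Since A has characteristic p and q is a power of p, x |-> x^q is a ring
   endomorphism of A, so c_k^q = sum (-1)^i a_i^q a_(2k-i)^(q^2); reindexing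
   c_k by i |-> 2k - i (harmless for the sign, 2k being even) and subtracting
   gives c_k^q - c_k = f_(2k). *)

Section CardFrobenius.
Variables (F : finFieldType) (A : comAlgType F).

Lemma pnat_card_finField : [pchar F].-nat #|F|.
Proof.
have [p _ pF] := finPcharP F.
rewrite (eq_pnat _ (pcharf_eq pF)) -cardsT.
exact/abelem_pgroup/fin_ring_pchar_abelem.
Qed.

Definition qFrobenius (x : A) : A := x ^+ qF F.

Lemma qFrobenius_is_nmod_morphism : nmod_morphism qFrobenius.
Proof.
split=> [|x y]; last first.
  by apply: exprDn_pchar; rewrite (eq_pnat _ (pchar_lalg A)) pnat_card_finField.
by rewrite /qFrobenius expr0n /qF; case: #|F| (finNzRing_gt1 F).
Qed.

Lemma qFrobenius_is_monoid_morphism : monoid_morphism qFrobenius.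
Proof. by split=> [|x y]; rewrite /qFrobenius ?expr1n ?exprMn. Qed.

HB.instance Definition _ := GRing.isNmodMorphism.Build A A qFrobenius
  qFrobenius_is_nmod_morphism.
HB.instance Definition _ := GRing.isMonoidMorphism.Build A A qFrobenius
  qFrobenius_is_monoid_morphism.

End CardFrobenius.

Lemma det_mx22 (R : comPzRingType) (M : 'M[R]_2) :
  \det M = M 0 0 * M 1 1 - M 0 1 * M 1 0.
Proof.
rewrite (expand_det_row _ 0) !big_ord_recl big_ord0 /cofactor !det_mx11 !mxE /=.
rewrite addr0 expr0 expr1 mul1r mulN1r mulrN.
by congr (_ * _ - _ * _); congr (M _ _); apply/val_inj.
Qed.

Lemma big_nat_parity (V : nmodType) (G : nat -> V) k :
  \sum_(0 <= i < (2 * k).+1) G i =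
  \sum_(0 <= j < k.+1) G (2 * j)%N + \sum_(0 <= j < k) G (2 * j).+1.
Proof.
elim: k => [|k IHk]; first by rewrite muln0 !big_nat1 big_geq // addr0.
rewrite mulnS add2n big_nat_recr //= big_nat_recr //= IHk.
rewrite (big_nat_recr k.+1 0 (fun j => G (2 * j)%N)) //=.
rewrite (big_nat_recr k 0 (fun j => G (2 * j).+1)) //= mulnS add2n.
by rewrite -!addrA; congr (_ + _); rewrite [RHS]addrC -addrA.
Qed.

Lemma sum_sign_rev (R : pzRingType) (G : nat -> nat -> R) n :
  ~~ odd n ->
  \sum_(0 <= i < n.+1) (-1) ^+ i * G i (n - i)%N =
  \sum_(0 <= i < n.+1) (-1) ^+ i * G (n - i)%N i.
Proof.
move=> n_even; rewrite big_nat_rev; apply: eq_big_nat => i /andP[_ le_i_n].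
by rewrite add0n subSS subKn // -signr_odd oddB // (negPf n_even) signr_odd.
Qed.

Section DetCoefficients.
Variables (F : finFieldType) (A : comAlgType F) (h : nat) (a : nat -> A).
Local Notation q := (qF F).

Definition tau_coef (m : nat) : A := if m == 0%N then 1 else Defs.coord h a m.

Lemma c_coef_parity k : (k < h)%N ->
  c_coef h a k =
    \sum_(0 <= j < k.+1) tau_coef (2 * j) * tau_coef (2 * (k - j)) ^+ q
  - \sum_(0 <= j < k) tau_coef (2 * j).+1 * tau_coef (2 * (k - j)).-1 ^+ q.
Proof.
move=> lt_k_h; rewrite /c_coef det_mx22 !mxE /= coefB !coefM.
rewrite [X in _ - X]big_ord_recr /= subnn [(iotaC _ _)`_0]coef_poly if_same mulr0 addr0.
have lt_h j : (j <= k)%N -> (j < h)%N by move=> ?; apply: leq_ltn_trans lt_k_h.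
have lt_h_sub j : (k - j < h)%N by apply/lt_h/leq_subr.
rewrite !big_mkord; congr (_ - _); apply: eq_bigr => -[j /= lt_j_k] _.
  rewrite !coef_poly lt_h_sub (lt_h j) // /tau_coef !muln_eq0 /=.
  by case: eqP; case: eqP; rewrite ?expr1n.
rewrite !coef_poly lt_h_sub (lt_h j (ltnW lt_j_k)) subn_eq0 leqNgt lt_j_k /tau_coef.
by have -> : ((2 * (k - j)).-1 == 0)%N = false by apply/eqP; lia.
Qed.

Lemma c_coef_alternating k : (k < h)%N ->
  c_coef h a k = \sum_(0 <= i < (2 * k).+1)
    (-1) ^+ i * (tau_coef i * tau_coef (2 * k - i) ^+ q).
Proof.
move=> lt_k_h; rewrite c_coef_parity // big_nat_parity -sumrN.
congr (_ + _); apply: eq_big_nat => j /andP[_ lt_j_k].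
  by rewrite mulnC exprM sqrr_sign mul1r mulnC mulnBr.
rewrite exprS mulnC exprM sqrr_sign mulr1 mulN1r mulnC.
by have -> : (2 * k - (2 * j).+1 = (2 * (k - j)).-1)%N by lia.
Qed.

(* The terms i = 0 and i = 2k are the leading term of f_(2k) and 0, as a_0 = 1. *)
Lemma f_even_alternating k : (1 <= k)%N ->
  f_even h a k = \sum_(0 <= i < (2 * k).+1)
    (-1) ^+ i * (tau_coef i ^+ q
                 * (tau_coef (2 * k - i) ^+ (q ^ 2) - tau_coef (2 * k - i))).
Proof.
move=> k_gt0; rewrite /f_even [RHS]big_ltn // (big_nat_recr (2 * k)) /=; last by lia.
rewrite /tau_coef subnn subn0 eqxx !expr1n subrr !mulr0 addr0 expr0 !mul1r.
have -> : (2 * k == 0)%N = false by apply/eqP; lia.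
congr (_ + _); apply: eq_big_nat => i /andP[i_gt0 lt_i_2k].
rewrite mulrA; have -> : (i == 0)%N = false by apply/eqP; lia.
by have -> : (2 * k - i == 0)%N = false by apply/eqP; lia.
Qed.

Lemma c_coef_frobenius_sub k : (1 <= k)%N -> (k < h)%N ->
  c_coef h a k ^+ q - c_coef h a k = f_even h a k.
Proof.
move=> k_gt0 lt_k_h.
have -> : c_coef h a k ^+ q = qFrobenius F A (c_coef h a k) by [].
rewrite c_coef_alternating // rmorph_sum.
rewrite (@sum_sign_rev _ (fun i j => tau_coef i * tau_coef j ^+ q)) ?oddM //.
rewrite -sumrB f_even_alternating //; apply: eq_bigr => i _.
rewrite rmorphM rmorph_sign rmorphM /= /qFrobenius -exprM mulnn.
by rewrite -mulrBr (mulrC (tau_coef _)) -mulrBr.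
Qed.

End DetCoefficients.

Theorem theorem4p1 (F : finFieldType) (A : comAlgType F) (h : nat)
  (hh : (2 <= h)%N) (a : nat -> A) :
  in_Xh h a <-> (forall k : nat, (1 <= k <= h - 1)%N -> f_even h a k = 0%R).
Proof.
have c_fixed_f0 k : (1 <= k <= h - 1)%N ->
    (c_coef h a k ^+ qF F == c_coef h a k) = (f_even h a k == 0).
  by case/andP=> k_gt0 le_k_h; rewrite -subr_eq0 c_coef_frobenius_sub //; lia.
split=> Xh k k_range; apply/eqP.
  by rewrite -c_fixed_f0 // Xh.
by rewrite c_fixed_f0 // Xh.
Qed.
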